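(* Define, for $z=(p,\tilde\theta)\in\mathbb{R}^n\times\mathbb{R}^{|\mathcal E|}$ and $\sigma=(\lambda,\eta,\nu)\in\mathbb{R}\times\mathbb{R}^{2|\mathcal E|}\times\mathbb{R}^n$, \[ \hat L(z,\sigma)=\sum_{j=1}^n J_j(p_j)-\tfrac12\nu^TD\nu+\nu^T(p-d-CB\tilde\theta)-\lambda\mathbf 1^T(p-d)+\eta^T\big(H^T(p-d)-F\big), \] and the closed-loop system \[ T^z\dot z=-\nabla_z\hat L(z,\sigma),\qquad T^\sigma\dot\sigma=\big[\nabla_\sigma\hat L(z,\sigma)\big]^+_\eta, \] where $T^z,T^\sigma$ are diagonal matrices with positive diagonal entries and the projection acts only on the $\eta$-components. Let $(z^*,\sigma^* )$, with $\eta^*\ge0$, be an equilibrium of this system. If a trajectory $(z(t),\sigma(t))$ of the system with $\eta(0)\ge0$ satisfies $\hat L(z^*,\sigma(t))\equiv\hat L(z^*,\sigma^* )$ and $\hat L(z(t),\sigma^* )\equiv\hat L(z^*,\sigma^* )$ for all $t\ge0$, then $\dot z\equiv0$ and $\dot\sigma\equiv0$.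
   Context: $(\mathcal N,\mathcal E)$ is a connected directed graph with $\mathcal N=\{1,\dots,n\}$; $C$ is its incidence matrix ($C_{j,e}=1$ if $e=(j,k)$, $-1$ if $e=(k,j)$, $0$ otherwise). $B$ and $D$ are diagonal with positive diagonal entries. $L:=CBC^T$, $H\in\mathbb{R}^{n\times 2|\mathcal E|}$ with $H^T=\begin{bmatrix} BC^TL^\dagger\\ -BC^TL^\dagger\end{bmatrix}$ ($L^\dagger$ Moore–Penrose inverse), $F=\begin{bmatrix}\overline F\\-\underline F\end{bmatrix}\in\mathbb{R}^{2|\mathcal E|}$, $d\in\mathbb{R}^n$. Each $J_j:\mathbb{R}\to\mathbb{R}$ is strictly convex and twice differentiable. Projection: for vectors $y,u$ of equal length, $([y]^+_u)_j=y_j$ if $y_j>0$ or $u_j>0$, and $0$ otherwise; here $[\cdot]^+_\eta$ is applied to the $\eta$-block of the gradient with $u=\eta$, other blocks unchanged. (This system models generators' quantity-bidding gradient play, market pricing dynamics, and linearized swing dynamics with $\omega\equiv\nu$.) *)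

From HB Require Import structures.
From mathcomp Require Import all_boot all_order all_algebra.
From mathcomp Require Import all_classical all_reals all_analysis.
Set Implicit Arguments. Unset Strict Implicit. Unset Printing Implicit Defensive.
Import Order.TTheory GRing.Theory Num.Theory.
Local Open Scope ring_scope.

Section Defs.
Variable R : realType.

Definition und_adj (n m : nat) (src dst : 'I_m -> 'I_n) : rel 'I_n :=
  fun j k => [exists e, ((src e == j) && (dst e == k)) || ((src e == k) && (dst e == j))].

Definition graph_connected (n m : nat) (src dst : 'I_m -> 'I_n) : Prop :=
  forall j k : 'I_n, connect (und_adj src dst) j k.

Definition incidence (n m : nat) (src dst : 'I_m -> 'I_n) : 'M[R]_(n, m) :=
  \matrix_(j, e) (if src e == j then 1 else if dst e == j then -1 else 0).

Definition is_MP_inverse (n : nat) (A X : 'M[R]_n) : Prop :=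
  [/\ A *m X *m A = A, X *m A *m X = X,
      (A *m X)^T = A *m X & (X *m A)^T = X *m A].

Definition strictly_convex (f : R -> R) : Prop :=
  forall x y a : R, x != y -> 0 < a < 1 ->
    f (a * x + (1 - a) * y) < a * f x + (1 - a) * f y.

Definition twice_differentiable (f : R -> R) : Prop :=
  forall x : R, derivable f x 1 /\ derivable (derive1 f) x 1.

Definition Hmat (n m : nat) (C : 'M[R]_(n, m)) (B : 'M[R]_m) (Ldag : 'M[R]_n)
  : 'M[R]_(n, m + m) :=
  (col_mx (B *m C^T *m Ldag) (- (B *m C^T *m Ldag)))^T.

Definition Lhat (n m : nat) (J : 'I_n -> R -> R) (D : 'M[R]_n) (C : 'M[R]_(n, m))
  (B : 'M[R]_m) (H : 'M[R]_(n, m + m)) (F : 'cV[R]_(m + m)) (d : 'cV[R]_n)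
  (p : 'cV[R]_n) (th : 'cV[R]_m) (lam : R) (eta : 'cV[R]_(m + m)) (nu : 'cV[R]_n) : R :=
  \sum_(j < n) J j (p j 0)
  - 2^-1 * (nu^T *m D *m nu) 0 0
  + (nu^T *m (p - d - C *m B *m th)) 0 0
  - lam * ((const_mx 1 : 'rV[R]_n) *m (p - d)) 0 0
  + (eta^T *m (H^T *m (p - d) - F)) 0 0.

Definition pderiv (k : nat) (f : 'cV[R]_k -> R) (x : 'cV[R]_k) (i : 'I_k) : R :=
  derive1 (fun s : R => f (x + s *: delta_mx i 0)) 0.

Definition grad (k : nat) (f : 'cV[R]_k -> R) (x : 'cV[R]_k) : 'cV[R]_k :=
  \col_i pderiv f x i.

Definition proj_pos (k : nat) (y u : 'cV[R]_k) : 'cV[R]_k :=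
  \col_j (if (0 < y j 0) || (0 < u j 0) then y j 0 else 0).

Definition dcoord (k : nat) (x : R -> 'cV[R]_k) (i : 'I_k) (t : R) : R :=
  derive1 (fun s => x s i 0) t.

Definition coord_derivable (k : nat) (x : R -> 'cV[R]_k) (i : 'I_k) (t : R) : Prop :=
  derivable (fun s => x s i 0) t 1.

End Defs.

From HB Require Import structures.
From mathcomp Require Import all_boot all_order all_algebra.
From mathcomp Require Import all_classical all_reals all_analysis.
From mathcomp Require Import ring lra.
Import Order.TTheory GRing.Theory Num.Theory.
Import numFieldNormedType.Exports.
Local Open Scope classical_set_scope.
Local Open Scope ring_scope.

(* The equilibrium is a saddle point of [Lhat]. Stationarity in [p] and strict
   convexity of the [J j] make [ps] the strict minimiser of the [p]-dependent
   part of [Lhat], while [th] only enters through [nus^T C B th], which vanishes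
   at equilibrium; so the invariance of [Lhat _ _ lams etas nus] along the
   trajectory forces [p t = ps]. With [p] frozen, the projected [eta]-dynamics
   keep [eta >= 0], and the gap [Lhat ps ths lam eta nu - Lhat ps ths lams etas nus]
   equals [- w^T D w / 2 + eta^T g] with [w = nu - nus] and [g <= 0] the
   [eta]-gradient at equilibrium; so the second invariance forces [nu t = nus]
   and [eta_j g_j = 0]. Every right-hand side of the closed loop then vanishes. *)

Section RealFunctions.
Variable R : realType.
Implicit Types (f : R -> R) (a c q t x : R).

Lemma derive1_eq0_of_const_right f t :
  derivable f t 1 -> (forall s, t <= s -> f s = f t) -> derive1 f t = 0.
Proof.
move=> df fc; rewrite derive1E /derive (cvg_at_rightE _ _ df).
apply: lim_near_cst => //; near=> h.
rewrite /= fc ?subrr ?scaler0 // [_%:A]mulr1 lerDr; near: h; exact: nbhs_right_ge.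
Unshelve. all: by end_near. Qed.

Lemma derivable_quotient_close f x eps : derivable f x 1 -> 0 < eps ->
  exists2 e, 0 < e & forall h, h != 0 -> `|h| < e ->
    `|derive1 f x - h^-1 * (f (h + x) - f x)| < eps.
Proof.
move=> df eps0; have /cvgr_dist_lt/(_ _ eps0)/nbhs_norm0P[e e0 He] := df.
exists e => // h h0 he; have := He h he h0.
by rewrite derive1E /= [_%:A]mulr1.
Qed.

Lemma strictly_convex_stationary_le f x0 :
  strictly_convex f -> derivable f x0 1 -> derive1 f x0 = 0 -> forall x, f x0 <= f x.
Proof.
move=> fc df f'0 x; have [->|xx0] := eqVneq x x0; first by [].
rewrite leNgt; apply/negP => fx.
set u := x - x0; set del := f x0 - f x.
have u0 : 0 < `|u| by rewrite normr_gt0 subr_eq0.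
have del0 : 0 < del by rewrite subr_gt0.
have [e e0 He] := derivable_quotient_close _ _ _ df (divr_gt0 del0 u0).
set a := Num.min (1/2 : R) (e / (2 * `|u|)).
have a0 : 0 < a by rewrite lt_min; apply/andP; split; [lra | rewrite divr_gt0 ?mulr_gt0].
have a1 : a < 1 by rewrite gt_min; apply/orP; left; lra.
have aue : a * `|u| < e.
  have : a <= e / (2 * `|u|) by rewrite ge_min lexx orbT.
  by rewrite ler_pdivlMr ?mulr_gt0 //; nra.
(* below the chord, the drop [a * del] is too large for a vanishing derivative *)
have drop : f (a * u + x0) - f x0 < - (a * del).
  have := fc x x0 a xx0; rewrite a0 a1 => /(_ isT).
  by rewrite (_ : a * x + (1 - a) * x0 = a * u + x0) /del; [lra | rewrite /u; ring].
have au0 : a * u != 0 by rewrite mulf_neq0 ?(lt0r_neq0 a0) // -normr_gt0.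
have := He (a * u) au0; rewrite normrM gtr0_norm // aue f'0 sub0r normrN.
move=> /(_ isT); rewrite normrM normfV normrM gtr0_norm // ltr_pdivrMl ?mulr_gt0 //.
have -> : a * `|u| * (del / `|u|) = a * del by field; rewrite gt_eqF.
by rewrite ltr_norml; lra.
Qed.

Lemma strictly_convex_stationary_min f x0 :
  strictly_convex f -> derivable f x0 1 -> derive1 f x0 = 0 ->
  forall x, x != x0 -> f x0 < f x.
Proof.
move=> fc df f'0 x xx0; have := fc x x0 (1/2) xx0.
rewrite (_ : 0 < 1/2 < 1); last by apply/andP; split; lra.
move=> /(_ isT); have := strictly_convex_stationary_le _ _ fc df f'0 (1/2 * x + (1 - 1/2) * x0).
lra.
Qed.

Lemma projected_flow_nonneg f (T g : R) : 0 < T -> g <= 0 -> 0 <= f 0 ->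
  (forall t, 0 <= t -> derivable f t 1 /\
     T * derive1 f t = (if (0 < g) || (0 < f t) then g else 0)) ->
  forall t, 0 <= t -> 0 <= f t.
Proof.
move=> T0 g0 f0 hf.
have df t : 0 <= t -> derivable f t 1 by move=> /hf[].
have itv_ge0 a b t : 0 <= a -> t \in `]a, b[ -> 0 <= t.
  by move=> a0; rewrite in_itv => /andP[/ltW/(le_trans a0)].
have cf a b : 0 <= a -> {within `[a, b], continuous f}.
  move=> a0; apply: derivable_within_continuous => x.
  by rewrite in_itv => /andP[/(le_trans a0)/df].
have f'_le0 t : 0 <= t -> derive1 f t <= 0.
  by move=> /hf[_]; case: ifP => _ h; nra.
have f_noninc a b : 0 <= a -> a <= b -> f b <= f a.
  move=> a0 ab; apply: (@ler0_derive1_le_cc _ f a b) => //.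
  - by move=> t /(itv_ge0 _ _ _ a0)/df.
  - by move=> t /(itv_ge0 _ _ _ a0)/f'_le0.
  - exact: cf.
  - by rewrite in_itv /= lexx ab.
  - by rewrite in_itv /= lexx ab.
move=> t1 t10; rewrite leNgt; apply/negP => ft1.
have hv : Num.min (f 0) (f t1) <= f t1 / 2 <= Num.max (f 0) (f t1).
  by rewrite ge_min le_max; apply/andP; split; apply/orP; [right|left]; lra.
have [s] := @IVT R f 0 t1 (f t1 / 2) t10 (cf 0 t1 (lexx 0)) hv.
rewrite in_itv /= => /andP[s0 st1] fs.
(* once [f] is negative the projection freezes it, so [f] cannot go below [f s] *)
suff : f s <= f t1 by lra.
apply: (@ger0_derive1_le_cc _ f s t1) => //.
- by move=> t /(itv_ge0 _ _ _ s0)/df.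
- move=> t; rewrite in_itv /= => /andP[st _].
  have t0 : 0 <= t by apply: le_trans s0 (ltW st).
  have [_] := hf t t0; rewrite ifF; first by nra.
  have := f_noninc s t s0 (ltW st); rewrite ltNge g0 /=; apply: contra_leF; lra.
- exact: cf.
- by rewrite in_itv /= lexx st1.
- by rewrite in_itv /= lexx st1.
Qed.

Lemma derive1_affine a c x : derive1 (fun s => a + s * c) x = c.
Proof.
rewrite derive1E; apply: derive_val; apply: is_derive_eq.
by rewrite add0r mul1r scaler0 add0r; exact: mulr1.
Qed.

Lemma derive1_quadratic0 a c q : derive1 (fun s => a + s * c - 2^-1 * s ^+ 2 * q) 0 = c.
Proof.
rewrite derive1E; apply: derive_val; apply: is_derive_eq.
by rewrite add0r mul1r !scale0r add0r addr0 !scaler0 addr0 subr0; exact: mulr1.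
Qed.

Lemma derive1_shift f c x : derive1 (fun s => c + f (x + s)) 0 = derive1 f x.
Proof.
rewrite !derive1E /derive /=.
suff -> : (fun h => h^-1 *: ((c + f (x + (h *: 1 + 0))) - (c + f (x + 0))))
  = (fun h => h^-1 *: (f (h *: 1 + x) - f x)) by [].
by apply: funext => h; rewrite !addr0 [_ *: 1 + x]addrC opprD addrACA subrr add0r.
Qed.

Lemma strictly_convex_add_linear f c :
  strictly_convex f -> strictly_convex (fun x => f x + c * x).
Proof.
move=> fc x y a xy a01 /=.
rewrite [X in _ < X](_ : _ = a * f x + (1 - a) * f y + c * (a * x + (1 - a) * y)); last by ring.
by rewrite ltrD2r; apply: fc.
Qed.

End RealFunctions.

Section MatrixEntries.
Variable R : comPzRingType.

Lemma mx_entry0 k l i j : (0 : 'M[R]_(k, l)) i j = 0.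
Proof. by rewrite mxE. Qed.

Lemma mx_entryD k l (A B : 'M[R]_(k, l)) i j : (A + B) i j = A i j + B i j.
Proof. by rewrite mxE. Qed.

Lemma mx_entryN k l (A : 'M[R]_(k, l)) i j : (- A) i j = - A i j.
Proof. by rewrite mxE. Qed.

Lemma mx_entryZ k l a (A : 'M[R]_(k, l)) i j : (a *: A) i j = a * A i j.
Proof. by rewrite mxE. Qed.

Lemma mx_entryT k l (A : 'M[R]_(k, l)) i j : A^T j i = A i j.
Proof. by rewrite mxE. Qed.

Definition mx_entryE := (mx_entry0, mx_entryD, mx_entryN, mx_entryZ).

Lemma trmxD k l (A B : 'M[R]_(k, l)) : (A + B)^T = A^T + B^T.
Proof. exact: linearD. Qed.

Lemma trmxZ k l a (A : 'M[R]_(k, l)) : (a *: A)^T = a *: A^T.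
Proof. exact: linearZ. Qed.

Lemma mul_row_delta k (u : 'rV[R]_k) i : (u *m delta_mx i (0 : 'I_1)) 0 0 = u 0 i.
Proof. by rewrite -colE mxE. Qed.

Lemma mul_delta_col k (v : 'cV[R]_k) i : ((delta_mx i (0 : 'I_1))^T *m v) 0 0 = v i 0.
Proof. by rewrite trmx_delta -rowE mxE. Qed.

Lemma mul_tr_col k (u v : 'cV[R]_k) : (u^T *m v) 0 0 = \sum_j u j 0 * v j 0.
Proof. by rewrite mxE; apply: eq_bigr => j _; rewrite mxE. Qed.

Lemma quad_formDl k (A : 'M[R]_k) (u v : 'cV[R]_k) : A^T = A ->
  ((u + v)^T *m A *m (u + v)) 0 0 - (v^T *m A *m v) 0 0
  = (u^T *m A *m u) 0 0 + 2 * (u^T *m (A *m v)) 0 0.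
Proof.
move=> AT; have sym : (v^T *m A *m u) 0 0 = (u^T *m A *m v) 0 0.
  by rewrite -[LHS]mx_entryT !trmx_mul trmxK AT mulmxA.
by rewrite trmxD !(mulmxDl, mulmxDr) !mx_entryE sym mulmxA; ring.
Qed.

Lemma sum_shift_coord k (G : 'I_k -> R -> R) (p : 'cV[R]_k) i s :
  \sum_j G j ((p + s *: delta_mx i 0) j 0)
  = \sum_j G j (p j 0) + (G i (p i 0 + s) - G i (p i 0)).
Proof.
rewrite (bigD1 i) //= [in RHS](bigD1 i) //= !mxE eqxx mulr1.
rewrite (eq_bigr (fun j => G j (p j 0))); first by ring.
by move=> j ji; rewrite !mxE (negbTE ji) mulr0 addr0.
Qed.

End MatrixEntries.

Section OrderedSums.
Variable R : realDomainType.

Lemma quad_form_diag_gt0 k (c : 'I_k -> R) (w : 'cV[R]_k) :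
  (forall j, 0 < c j) -> w != 0 -> 0 < (w^T *m diag_mx (\row_j c j) *m w) 0 0.
Proof.
move=> c_gt0 w0; rewrite mul_mx_diag mxE.
have terms_ge0 j : true -> 0 <= (w j 0 * c j) * w j 0.
  by rewrite mulrAC -expr2 mulr_ge0 ?sqr_ge0 ?ltW.
rewrite (eq_bigr (fun j => (w j 0 * c j) * w j 0)) => [|j _]; last by rewrite !mxE.
rewrite lt_def sumr_ge0 // andbT; apply: contra w0 => /eqP/(psumr_eq0P terms_ge0) w_eq0.
apply/eqP/matrixP => j l; rewrite (ord1 l) mxE; have /eqP := w_eq0 j isT.
by rewrite mulrAC -expr2 mulf_eq0 (gt_eqF (c_gt0 j)) orbF sqrf_eq0 => /eqP.
Qed.

Lemma sum_strict_minimizers_eq k (phi : 'I_k -> R -> R) (x xs : 'cV[R]_k) :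
  (forall j y, y != xs j 0 -> phi j (xs j 0) < phi j y) ->
  \sum_j phi j (x j 0) = \sum_j phi j (xs j 0) -> x = xs.
Proof.
move=> xs_min /eqP; rewrite -subr_eq0 -sumrB => /eqP sum0.
have ge0 j : true -> 0 <= phi j (x j 0) - phi j (xs j 0).
  by have [->|/xs_min/ltW] := eqVneq (x j 0) (xs j 0); rewrite subr_ge0.
apply/matrixP => j l; rewrite (ord1 l); apply/eqP/negPn/negP => /xs_min.
by have := @psumr_eq0P _ _ _ _ ge0 sum0 j isT; lra.
Qed.

End OrderedSums.

Section Projection.
Variable R : realType.

Lemma proj_posE k (y u : 'cV[R]_k) i :
  proj_pos y u i 0 = if (0 < y i 0) || (0 < u i 0) then y i 0 else 0.
Proof. by rewrite mxE. Qed.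

Lemma proj_pos_eq0 k (y u : 'cV[R]_k) : (forall i, 0 <= u i 0) -> proj_pos y u = 0 ->
  forall i, y i 0 <= 0 /\ u i 0 * y i 0 = 0.
Proof.
move=> u_ge0 /matrixP/(_ _ 0) y0 i; have := y0 i; rewrite proj_posE mxE.
case: ifP => [_ ->|/negbT]; first by rewrite lexx mulr0.
rewrite negb_or -!leNgt => /andP[-> u_le0] _.
by rewrite (@le_anti _ _ (u i 0) 0) ?u_le0 ?u_ge0 ?mul0r.
Qed.

End Projection.

Section Lagrangian.
Context {R : realType} {n m : nat}.

(* Apart from [\sum_j J j (p j 0)], [Lhat] is affine in [p] with this slope. *)
Definition Lhat_pcoef (H : 'M[R]_(n, m + m)) lam (eta : 'cV[R]_(m + m)) (nu : 'cV[R]_n)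
  : 'rV[R]_n := nu^T - lam *: const_mx 1 + eta^T *m H^T.

Context {J : 'I_n -> R -> R} {D : 'M[R]_n} {C : 'M[R]_(n, m)} {B : 'M[R]_m}
  {H : 'M[R]_(n, m + m)} {F : 'cV[R]_(m + m)} {d : 'cV[R]_n}.

Local Notation L := (Lhat J D C B H F d).

Lemma Lhat_z_expand p th p' th' lam eta nu :
  L p th lam eta nu = L p' th' lam eta nu
  + (\sum_(j < n) J j (p j 0) - \sum_(j < n) J j (p' j 0))
  + (Lhat_pcoef H lam eta nu *m (p - p')) 0 0 - (nu^T *m (C *m B *m (th - th'))) 0 0.
Proof.
rewrite /Lhat /Lhat_pcoef.
rewrite !(mulmxBr, mulmxDr, mulmxBl, mulmxDl, mulNmx, mulmxN) -!scalemxAl !mulmxA.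
rewrite !mx_entryE; ring.
Qed.

Lemma Lhat_sigma_expand p th lam eta nu lam' eta' nu' :
  L p th lam eta nu = L p th lam' eta' nu'
  - 2^-1 * ((nu^T *m D *m nu) 0 0 - (nu'^T *m D *m nu') 0 0)
  + ((nu - nu')^T *m (p - d - C *m B *m th)) 0 0
  - (lam - lam') * ((const_mx 1 : 'rV[R]_n) *m (p - d)) 0 0
  + ((eta - eta')^T *m (H^T *m (p - d) - F)) 0 0.
Proof. by rewrite /Lhat !raddfB /= !mulmxBl !mx_entryE; ring. Qed.

Lemma grad_Lhat_th p th lam eta nu :
  grad (fun x => L p x lam eta nu) th = - ((C *m B)^T *m nu).
Proof.
apply/matrixP => i j; rewrite (ord1 j) [LHS]mxE mx_entryN /pderiv.
pose c := (nu^T *m (C *m B) *m (delta_mx i 0 : 'cV[R]_m)) 0 0.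
rewrite (_ : (fun s => _) = (fun s => L p th lam eta nu + s * - c)).
  rewrite derive1_affine /c mul_row_delta.
  by rewrite -[in RHS]mx_entryT trmx_mul trmxK.
apply: funext => s; rewrite (Lhat_z_expand _ (th + _) p th) (addrC th) addrK.
by rewrite !subrr mulmx0 mxE -!scalemxAr mx_entryZ /c !mulmxA; ring.
Qed.

Lemma grad_Lhat_eta p th lam eta nu :
  grad (fun x => L p th lam x nu) eta = H^T *m (p - d) - F.
Proof.
apply/matrixP => i j; rewrite (ord1 j) [LHS]mxE /pderiv.
rewrite (_ : (fun s => _) = (fun s => L p th lam eta nu + s * (H^T *m (p - d) - F) i 0)).
  exact: derive1_affine.
apply: funext => s; rewrite (Lhat_sigma_expand _ _ _ (eta + _) _ lam eta nu) (addrC eta) addrK.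
rewrite !subrr trmxZ -scalemxAl mx_entryZ mul_delta_col trmx0 !mul0mx mxE; ring.
Qed.

Lemma derive1_Lhat_lam p th lam eta nu :
  derive1 (fun l => L p th l eta nu) lam = - ((const_mx 1 : 'rV[R]_n) *m (p - d)) 0 0.
Proof.
set c := ((const_mx 1 : 'rV[R]_n) *m (p - d)) 0 0.
rewrite (_ : (fun l => _) = (fun l => (L p th lam eta nu + lam * c) + l * - c)).
  exact: derive1_affine.
apply: funext => l; rewrite (Lhat_sigma_expand _ _ l _ _ lam eta nu).
by rewrite !subrr !trmx0 !mul0mx !mx_entry0 -/c; ring.
Qed.

Lemma grad_Lhat_nu p th lam eta nu : D^T = D ->
  grad (fun x => L p th lam eta x) nu = p - d - C *m B *m th - D *m nu.
Proof.
move=> DT; apply/matrixP => i j; rewrite (ord1 j) [LHS]mxE /pderiv.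
set e := delta_mx i 0 : 'cV[R]_n; set a := p - d - C *m B *m th.
have DeT : (nu^T *m D *m e) 0 0 = (e^T *m D *m nu) 0 0.
  by rewrite -[LHS]mx_entryT !trmx_mul trmxK DT mulmxA.
rewrite (_ : (fun s => _) = (fun s => L p th lam eta nu
    + s * (a i 0 - (D *m nu) i 0) - 2^-1 * s ^+ 2 * (e^T *m D *m e) 0 0)).
  by rewrite derive1_quadratic0 !mx_entryE.
apply: funext => s; rewrite (Lhat_sigma_expand _ _ lam eta (nu + _) lam eta nu).
rewrite !subrr !trmx0 !mul0mx (addrC nu) addrK -/a trmxD !trmxZ.
rewrite !(mulmxDl, mulmxDr) -!scalemxAl -!scalemxAr !mx_entryE !mul_delta_col DeT.
by rewrite -[e^T *m D *m nu]mulmxA !mul_delta_col !mx_entryE; field.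
Qed.

Lemma pderiv_Lhat_p p th lam eta nu i :
  pderiv (fun x => L x th lam eta nu) p i
  = derive1 (fun x => J i x + Lhat_pcoef H lam eta nu 0 i * x) (p i 0).
Proof.
set k := Lhat_pcoef H lam eta nu 0 i; set phi := fun x => J i x + k * x.
pose c := L p th lam eta nu - phi (p i 0).
rewrite /pderiv (_ : (fun s => _) = (fun s => c + phi (p i 0 + s))); first exact: derive1_shift.
apply: funext => s; rewrite (Lhat_z_expand _ th p th) sum_shift_coord (addrC p) addrK.
by rewrite !subrr !mulmx0 mx_entry0 -scalemxAr mx_entryZ mul_row_delta -/k /c /phi; ring.
Qed.

Lemma Lhat_p_stationary_min {p : 'cV[R]_n} {th lam eta nu} :
  (forall i, strictly_convex (J i)) -> (forall i, derivable (J i) (p i 0) 1) ->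
  grad (fun x => L x th lam eta nu) p = 0 ->
  forall i x, x != p i 0 ->
    J i (p i 0) + Lhat_pcoef H lam eta nu 0 i * p i 0
    < J i x + Lhat_pcoef H lam eta nu 0 i * x.
Proof.
move=> Jconv dJ gp i x; set k := Lhat_pcoef H lam eta nu 0 i.
apply: (@strictly_convex_stationary_min _ (fun y => J i y + k * y)).
- exact: strictly_convex_add_linear.
- by apply: derivableD; [exact: dJ | apply: ex_derive; apply: is_derive_eq].
- by have /matrixP/(_ i 0) := gp; rewrite !mxE pderiv_Lhat_p.
Qed.

Section Equilibrium.
Context {ps : 'cV[R]_n} {ths : 'cV[R]_m} {lams : R} {etas : 'cV[R]_(m + m)}
  {nus : 'cV[R]_n}.

Local Notation g := (H^T *m (ps - d) - F).
Local Notation phi i x := (J i x + Lhat_pcoef H lams etas nus 0 i * x).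

Hypothesis CB_nus : (C *m B)^T *m nus = 0.
Hypothesis balance : ((const_mx 1 : 'rV[R]_n) *m (ps - d)) 0 0 = 0.
Hypothesis flow_nus : ps - d - C *m B *m ths = D *m nus.
Hypothesis slackness : forall j, g j 0 <= 0 /\ etas j 0 * g j 0 = 0.
Hypothesis ps_min : forall i x, x != ps i 0 -> phi i (ps i 0) < phi i x.
Hypothesis D_sym : D^T = D.
Hypothesis D_posdef : forall w : 'cV[R]_n, w != 0 -> 0 < (w^T *m D *m w) 0 0.

Lemma Lhat_z_level_eq {p th} :
  L p th lams etas nus = L ps ths lams etas nus -> p = ps.
Proof.
have nusCB : nus^T *m (C *m B) = 0.
  by rewrite -[LHS]trmxK trmx_mul trmxK CB_nus trmx0.
rewrite (Lhat_z_expand p th ps ths) mulmxA nusCB mul0mx mx_entry0 subr0.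
rewrite -addrA -[X in _ = X]addr0 => /addrI sum0.
apply: (@sum_strict_minimizers_eq _ _ (fun i x => phi i x) _ _ ps_min).
apply/eqP; rewrite -subr_eq0 -sumrB; apply/eqP; rewrite -[RHS]sum0 mxE -sumrB -big_split.
by apply: eq_bigr => j _ /=; rewrite !mx_entryE; ring.
Qed.

Lemma Lhat_sigma_level_eq {lam} {eta : 'cV[R]_(m + m)} {nu} : (forall j, 0 <= eta j 0) ->
  L ps ths lam eta nu = L ps ths lams etas nus ->
  nu = nus /\ forall j, eta j 0 * g j 0 = 0.
Proof.
move=> eta_ge0; rewrite (Lhat_sigma_expand _ _ lam eta nu lams etas nus) balance mulr0 subr0.
(* the level gap is [- Q / 2 + \sum_j eta_j g_j], a sum of two nonpositive terms *)
rewrite flow_nus -[nu](subrK nus) quad_formDl // addrK.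
set w := nu - nus; set Q := (w^T *m D *m w) 0 0.
have -> : ((eta - etas)^T *m g) 0 0 = \sum_j eta j 0 * g j 0.
  rewrite mul_tr_col; apply: eq_bigr => j _.
  by rewrite mx_entryD mx_entryN mulrBl (slackness j).2 subr0.
have Q_ge0 : 0 <= Q.
  by rewrite /Q; have [->|/D_posdef/ltW //] := eqVneq w 0; rewrite trmx0 !mul0mx mx_entry0.
have terms_le0 j : true -> 0 <= - (eta j 0 * g j 0).
  by rewrite oppr_ge0 mulr_ge0_le0 // (slackness j).1.
have S_le0 : \sum_j eta j 0 * g j 0 <= 0.
  by rewrite -oppr_ge0 -sumrN sumr_ge0.
move=> /eqP; rewrite -subr_eq0 => /eqP E.
split.
  have w0 : w = 0 by apply/eqP/negPn/negP => /D_posdef; rewrite -/Q; lra.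
  by rewrite w0 add0r.
have S0 : \sum_j - (eta j 0 * g j 0) = 0 by rewrite sumrN; lra.
by move=> j; have := @psumr_eq0P _ _ _ _ terms_le0 S0 j isT; lra.
Qed.

Lemma Lhat_level_trajectory {Teta : 'I_(m + m) -> R} {p : R -> 'cV[R]_n}
    {th : R -> 'cV[R]_m} {lam : R -> R} {eta : R -> 'cV[R]_(m + m)} {nu : R -> 'cV[R]_n} :
  (forall j, 0 < Teta j) -> (forall j, 0 <= eta 0 j 0) ->
  (forall t, 0 <= t -> forall j, coord_derivable eta j t /\
     Teta j * dcoord eta j t
     = proj_pos (grad (fun x => L (p t) (th t) (lam t) x (nu t)) (eta t)) (eta t) j 0) ->
  (forall t, 0 <= t -> L ps ths (lam t) (eta t) (nu t) = L ps ths lams etas nus) ->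
  (forall t, 0 <= t -> L (p t) (th t) lams etas nus = L ps ths lams etas nus) ->
  forall t, 0 <= t -> [/\ p t = ps, nu t = nus & forall j, eta t j 0 * g j 0 = 0].
Proof.
move=> Teta_gt0 eta0_ge0 deta inv_sigma inv_z.
have p_eq t : 0 <= t -> p t = ps by move=> /inv_z/Lhat_z_level_eq.
have eta_ge0 t : 0 <= t -> forall j, 0 <= eta t j 0.
  move=> t0 j; apply: (projected_flow_nonneg _ (fun s => eta s j 0) _ _ (Teta_gt0 j)
    (slackness j).1 (eta0_ge0 j)) => // u u0.
  have [du equ] := deta u u0 j; split=> //.
  by rewrite /dcoord in equ; rewrite equ grad_Lhat_eta p_eq // proj_posE.
move=> t t0; have [nu_t eta_g] := Lhat_sigma_level_eq (eta_ge0 t t0) (inv_sigma t t0).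
by split=> //; exact: p_eq.
Qed.

Lemma grad_Lhat_th_nus p th lam eta : grad (fun x => L p x lam eta nus) th = 0.
Proof. by rewrite grad_Lhat_th CB_nus oppr0. Qed.

Lemma derive1_Lhat_lam_ps th lam eta nu : derive1 (fun l => L ps th l eta nu) lam = 0.
Proof. by rewrite derive1_Lhat_lam balance oppr0. Qed.

Lemma proj_grad_Lhat_eta_ps th lam (eta : 'cV[R]_(m + m)) nu :
  (forall j, eta j 0 * g j 0 = 0) ->
  proj_pos (grad (fun x => L ps th lam x nu) eta) eta = 0.
Proof.
move=> eta_g; apply/matrixP => i j; rewrite (ord1 j) proj_posE grad_Lhat_eta mx_entry0.
case: ifP => // /orP[g_pos | eta_pos]; first by move: g_pos; rewrite ltNge (slackness i).1.
by have /eqP := eta_g i; rewrite mulf_eq0 (gt_eqF eta_pos) => /eqP.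
Qed.

End Equilibrium.

End Lagrangian.

Theorem proposition1 (R : realType) (n m : nat)
  (src dst : 'I_m -> 'I_n)
  (hloop : forall e, src e != dst e)
  (hsimple : forall e e', src e = src e' -> dst e = dst e' -> e = e')
  (hconn : graph_connected src dst)
  (b : 'I_m -> R) (hb : forall e, 0 < b e)
  (dD : 'I_n -> R) (hD : forall j, 0 < dD j)
  (Ldag : 'M[R]_n)
  (hLdag : is_MP_inverse (incidence R src dst *m diag_mx (\row_e b e)
                            *m (incidence R src dst)^T) Ldag)
  (Fbar Funder : 'cV[R]_m) (d : 'cV[R]_n)
  (J : 'I_n -> R -> R)
  (hJconv : forall j, strictly_convex (J j))
  (hJdiff : forall j, twice_differentiable (J j))
  (Tp : 'I_n -> R) (Tth : 'I_m -> R) (Tlam : R) (Teta : 'I_(m + m) -> R)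
  (Tnu : 'I_n -> R)
  (hTp : forall i, 0 < Tp i) (hTth : forall i, 0 < Tth i) (hTlam : 0 < Tlam)
  (hTeta : forall i, 0 < Teta i) (hTnu : forall i, 0 < Tnu i)
  (ps : 'cV[R]_n) (ths : 'cV[R]_m) (lams : R) (etas : 'cV[R]_(m + m))
  (nus : 'cV[R]_n)
  (p : R -> 'cV[R]_n) (th : R -> 'cV[R]_m) (lam : R -> R)
  (eta : R -> 'cV[R]_(m + m)) (nu : R -> 'cV[R]_n) :
  let C := incidence R src dst in
  let B := diag_mx (\row_e b e) in
  let D := diag_mx (\row_j dD j) in
  let H := Hmat C B Ldag in
  let F := col_mx Fbar (- Funder) in
  let L := Lhat J D C B H F d in
  (* equilibrium (zs, sigmas) with etas >= 0 *)
  (forall j, 0 <= etas j 0) ->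
  grad (fun x => L x ths lams etas nus) ps = 0 ->
  grad (fun x => L ps x lams etas nus) ths = 0 ->
  derive1 (fun l => L ps ths l etas nus) lams = 0 ->
  proj_pos (grad (fun x => L ps ths lams x nus) etas) etas = 0 ->
  grad (fun x => L ps ths lams etas x) nus = 0 ->
  (* trajectory of the closed-loop system for t >= 0, with eta(0) >= 0 *)
  (forall j, 0 <= eta 0 j 0) ->
  (forall t, 0 <= t ->
     (forall i, coord_derivable p i t /\
        Tp i * dcoord p i t
        = - grad (fun x => L x (th t) (lam t) (eta t) (nu t)) (p t) i 0) /\
     (forall i, coord_derivable th i t /\
        Tth i * dcoord th i t
        = - grad (fun x => L (p t) x (lam t) (eta t) (nu t)) (th t) i 0) /\
     (derivable lam t 1 /\
        Tlam * derive1 lam t = derive1 (fun l => L (p t) (th t) l (eta t) (nu t)) (lam t)) /\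
     (forall i, coord_derivable eta i t /\
        Teta i * dcoord eta i t
        = proj_pos (grad (fun x => L (p t) (th t) (lam t) x (nu t)) (eta t))
                   (eta t) i 0) /\
     (forall i, coord_derivable nu i t /\
        Tnu i * dcoord nu i t
        = grad (fun x => L (p t) (th t) (lam t) (eta t) x) (nu t) i 0)) ->
  (* invariance of the Lagrangian along the trajectory *)
  (forall t, 0 <= t -> L ps ths (lam t) (eta t) (nu t) = L ps ths lams etas nus) ->
  (forall t, 0 <= t -> L (p t) (th t) lams etas nus = L ps ths lams etas nus) ->
  (* conclusion: zdot = 0 and sigmadot = 0 for all t >= 0 *)
  forall t, 0 <= t ->
    (forall i, dcoord p i t = 0) /\ (forall i, dcoord th i t = 0) /\
    derive1 lam t = 0 /\ (forall i, dcoord eta i t = 0) /\ (forall i, dcoord nu i t = 0).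
Proof.
move=> C B D H F L; rewrite {}/L.
move=> etas_ge0 gp gth glam geta gnu eta0_ge0 traj inv_sigma inv_z t t0.
have CB_nus : (C *m B)^T *m nus = 0 by apply: oppr_inj; rewrite oppr0 -gth grad_Lhat_th.
have balance : ((const_mx 1 : 'rV[R]_n) *m (ps - d)) 0 0 = 0.
  by apply: oppr_inj; rewrite oppr0 -glam derive1_Lhat_lam.
have flow_nus : ps - d - C *m B *m ths = D *m nus.
  by apply/eqP; rewrite -subr_eq0 -gnu grad_Lhat_nu // tr_diag_mx.
have slackness := proj_pos_eq0 _ _ _ _ etas_ge0 geta; rewrite grad_Lhat_eta in slackness.
have ps_min := Lhat_p_stationary_min hJconv (fun i => (hJdiff i _).1) gp.
have rest := Lhat_level_trajectory CB_nus balance flow_nus slackness ps_min (tr_diag_mx _)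
  (fun w => quad_form_diag_gt0 _ _ _ w hD) hTeta eta0_ge0
  (fun s s0 => (traj s s0).2.2.2.1) inv_sigma inv_z.
have [p_t nu_t eta_g] := rest t t0.
have [dp [dth [[_ dlam] [deta dnu]]]] := traj t t0.
split; [|split; [|split; [|split]]].
- move=> i; apply: derive1_eq0_of_const_right => [|s ts]; first exact: (dp i).1.
  by have [-> _ _] := rest s (le_trans t0 ts); rewrite p_t.
- move=> i; apply: (mulfI (lt0r_neq0 (hTth i))).
  by rewrite mulr0 (dth i).2 nu_t p_t grad_Lhat_th_nus // mxE oppr0.
- by apply: (mulfI (lt0r_neq0 hTlam)); rewrite mulr0 dlam p_t derive1_Lhat_lam_ps.
- move=> i; apply: (mulfI (lt0r_neq0 (hTeta i))).
  by rewrite mulr0 (deta i).2 p_t (proj_grad_Lhat_eta_ps slackness) // mxE.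
- move=> i; apply: derive1_eq0_of_const_right => [|s ts]; first exact: (dnu i).1.
  by have [_ -> _] := rest s (le_trans t0 ts); rewrite nu_t.
Qed.
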